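(* If $V$ is a value of the system $\mathbf{L}^{\Box}_{\mathrm{pol}}$ and $\Gamma ¦ \Theta \vdash V : A_{\square} ; \Delta$, then $\Gamma_{\square} ¦ \Theta \vdash V : A_{\square} ; \diamond$, where $\Gamma_{\square}$ is the sub-context of $\Gamma$ consisting of its variables of modal polarity.
   Context: $\mathbf{L}^{\Box}_{\mathrm{pol}}$ is a polarised sequent calculus (L-calculus) for classical S4 with three polarities $\epsilon \in \{+,-,\square\}$ ($\boxplus$ ranges over the positive polarities $\{+,\square\}$, $\pm$ over the non-modal polarities $\{+,-\}$). Types: $A,B ::= \mathbb{1} \mid A\otimes B \mid A\oplus B \mid \Box A \mid \neg A \mid A \,\&\, B \mid A ⅋ B$, where $⅋$ (''par'') is the negative disjunction. Polarities: $\varpi(\mathbb{1})=\varpi(\Box A)=\square$; $\varpi(\neg A)=\varpi(A\&B)=\varpi(A⅋B)=-$; $\varpi(A\otimes B)=\varpi(A\oplus B)=\varpi(A)\odot\varpi(B)$ with $\epsilon\odot\epsilon'=\square$ if $\epsilon=\epsilon'=\square$ and $+$ otherwise. $A_\epsilon$ means $\varpi(A)=\epsilon$. Values: $V,W ::= x \mid (V,W) \mid \square V \mid () \mid \iota_i V \mid \mu[x^\epsilon].c \mid \mu(\alpha^{\epsilon_1}.c_1,\beta^{\epsilon_2}.c_2) \mid \mu(\alpha^{\epsilon_1},\beta^{\epsilon_2}).c \mid \mu\alpha^-.c$. Typing contexts $(\Gamma ¦ \Theta \vdash \Delta)$ have three structural (non-linear) parts: $\Gamma$ ordinary variables, $\Theta$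 modal variables ($x:A\in\Theta$ is to be read as $x:\Box A\in\Gamma$), $\Delta$ covariables (continuations); $\diamond$ is the empty list. $\Gamma ¦ \Theta \vdash V : A ; \Delta$ is the value typing judgment. A context written $\Gamma_{\square}$ is one in which every type has polarity $\square$. The introduction rule for the modality is: from $\Gamma_{\square} ¦ \Theta \vdash V : A ; \diamond$ infer $\Gamma_{\square} ¦ \Theta \vdash \square V : \Box A ; \diamond$. Typing also admits renamings (weakening/contraction/exchange). *)

From Stdlib Require Import List Bool.
Import ListNotations.

Inductive polarity : Type := Pos | Neg | Bx.

Definition pol_odot (e e' : polarity) : polarity :=
  match e, e' with Bx, Bx => Bx | _, _ => Pos end.

Inductive ty : Type :=
| One : ty
| Tensor : ty -> ty -> ty
| Plus : ty -> ty -> ty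
| Box : ty -> ty
| Not : ty -> ty
| With : ty -> ty -> ty
| Par : ty -> ty -> ty.

Fixpoint pol (A : ty) : polarity :=
  match A with
  | One => Bx
  | Box _ => Bx
  | Not _ | With _ _ | Par _ _ => Neg
  | Tensor A B | Plus A B => pol_odot (pol A) (pol B)
  end.

Definition var := nat.
Definition covar := nat.

Inductive value : Type :=
| VVar : var -> value
| VPair : value -> value -> value
| VBox : value -> value
| VUnit : value
| VInj : bool -> value -> value                               (* iota_1 V (true) / iota_2 V (false) *)
| VMuNot : var -> polarity -> cmd -> value
| VMuWith : covar -> polarity -> cmd -> covar -> polarity -> cmd -> value
| VMuPar : covar -> polarity -> covar -> polarity -> cmd -> value
| VMuNeg : covar -> cmd -> value
with term : Type :=
| TVal : value -> term
| TMu : covar -> polarity -> cmd -> term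
with coterm : Type :=
| ECovar : covar -> coterm
| EMuT : var -> polarity -> cmd -> coterm
| EMuTPair : var -> polarity -> var -> polarity -> cmd -> coterm
| EMuTUnit : cmd -> coterm
| EMuTCase : var -> polarity -> cmd -> var -> polarity -> cmd -> coterm
| EMuTBox : var -> cmd -> coterm
| EStack : value -> coterm
| EProj : bool -> coterm -> coterm
| EParStk : coterm -> coterm -> coterm
with cmd : Type :=
| Cut : term -> coterm -> cmd.

Definition ctx := list (var * ty).
Definition cctx := list (covar * ty).

Definition is_box_type (A : ty) : bool :=
  match pol A with Bx => true | _ => false end.

Definition box_part (G : ctx) : ctx := filter (fun p => is_box_type (snd p)) G.

(** Typing judgments:
    vty G T V A D   :  G ¦ T |- V : A ; D
    tty G T t A D   :  G ¦ T |- t : A | D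
    ety G T e A D   :  G ¦ T | e : A |- D
    cty G T c D     :  c : (G ¦ T |- D)                                    *)
Inductive vty : ctx -> ctx -> value -> ty -> cctx -> Prop :=
| ty_var : forall G T D x A, In (x, A) G -> vty G T (VVar x) A D
| ty_mvar : forall G T D x A, In (x, A) T -> vty G T (VVar x) A D
| ty_pair : forall G T D V W A B,
    vty G T V A D -> vty G T W B D -> vty G T (VPair V W) (Tensor A B) D
| ty_unit : forall G T D, vty G T VUnit One D
| ty_inj1 : forall G T D V A B, vty G T V A D -> vty G T (VInj true V) (Plus A B) D
| ty_inj2 : forall G T D V A B, vty G T V B D -> vty G T (VInj false V) (Plus A B) D
| ty_box : forall G T V A,
    (forall p, In p G -> pol (snd p) = Bx) ->
    vty G T V A [] -> vty G T (VBox V) (Box A) []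
| ty_munot : forall G T D x e c A,
    pol A = e -> cty ((x, A) :: G) T c D -> vty G T (VMuNot x e c) (Not A) D
| ty_muwith : forall G T D a e1 c1 b e2 c2 A B,
    pol A = e1 -> pol B = e2 ->
    cty G T c1 ((a, A) :: D) -> cty G T c2 ((b, B) :: D) ->
    vty G T (VMuWith a e1 c1 b e2 c2) (With A B) D
| ty_mupar : forall G T D a e1 b e2 c A B,
    pol A = e1 -> pol B = e2 ->
    cty G T c ((a, A) :: (b, B) :: D) ->
    vty G T (VMuPar a e1 b e2 c) (Par A B) D
| ty_muneg : forall G T D a c A,
    pol A = Neg -> cty G T c ((a, A) :: D) -> vty G T (VMuNeg a c) A D
| ty_struct : forall G T D G' T' D' V A,
    vty G T V A D -> incl G G' -> incl T T' -> incl D D' ->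
    vty G' T' V A D'   (* renamings: weakening / contraction / exchange *)
with tty : ctx -> ctx -> term -> ty -> cctx -> Prop :=
| ty_val : forall G T D V A, vty G T V A D -> tty G T (TVal V) A D
| ty_mu : forall G T D a e c A,
    pol A = e -> e <> Neg -> cty G T c ((a, A) :: D) -> tty G T (TMu a e c) A D
with ety : ctx -> ctx -> coterm -> ty -> cctx -> Prop :=
| ty_covar : forall G T D a A, In (a, A) D -> ety G T (ECovar a) A D
| ty_mut : forall G T D x e c A,
    pol A = e -> cty ((x, A) :: G) T c D -> ety G T (EMuT x e c) A D
| ty_mutpair : forall G T D x e1 y e2 c A B,
    pol A = e1 -> pol B = e2 -> cty ((x, A) :: (y, B) :: G) T c D ->
    ety G T (EMuTPair x e1 y e2 c) (Tensor A B) D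
| ty_mutunit : forall G T D c, cty G T c D -> ety G T (EMuTUnit c) One D
| ty_mutcase : forall G T D x e1 c1 y e2 c2 A B,
    pol A = e1 -> pol B = e2 ->
    cty ((x, A) :: G) T c1 D -> cty ((y, B) :: G) T c2 D ->
    ety G T (EMuTCase x e1 c1 y e2 c2) (Plus A B) D
| ty_mutbox : forall G T D x c A,
    cty G ((x, A) :: T) c D -> ety G T (EMuTBox x c) (Box A) D
| ty_stack : forall G T D V A, vty G T V A D -> ety G T (EStack V) (Not A) D
| ty_proj1 : forall G T D e A B, ety G T e A D -> ety G T (EProj true e) (With A B) D
| ty_proj2 : forall G T D e A B, ety G T e B D -> ety G T (EProj false e) (With A B) D
| ty_parstk : forall G T D e1 e2 A B,
    ety G T e1 A D -> ety G T e2 B D -> ety G T (EParStk e1 e2) (Par A B) D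
with cty : ctx -> ctx -> cmd -> cctx -> Prop :=
| ty_cut : forall G T D t e A, tty G T t A D -> ety G T e A D -> cty G T (Cut t e) D.

(* A value of modal type is built from variables, pairs, injections, the
   unit and boxes only: pairs and injections have modal type only when their
   components do, and every mu-abstraction among values has negative type.
   Variables of modal type survive the restriction to the modal part of the
   context, no value of this shape mentions a covariable, and a box is
   already typed in a modal context with no covariables. *)
From Stdlib Require Import List.
Import ListNotations.

Lemma pol_odot_eq_Bx e e' : pol_odot e e' = Bx -> e = Bx /\ e' = Bx.
Proof. destruct e, e'; simpl; intuition congruence. Qed.

Lemma in_box_part G x A : In (x, A) G -> pol A = Bx -> In (x, A) (box_part G).
Proof.
  intros Hin HA. apply filter_In. split; [assumption|].
  unfold is_box_type; simpl; rewrite HA; reflexivity.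
Qed.

Lemma box_part_incl G G' : incl G G' -> incl (box_part G) (box_part G').
Proof.
  intros Hincl p Hin. apply filter_In in Hin as [HG Hbox].
  apply filter_In; auto.
Qed.

Lemma box_part_id G : (forall p, In p G -> pol (snd p) = Bx) -> box_part G = G.
Proof.
  induction G as [|[x A] G IH]; intros Hbox; [reflexivity|].
  unfold box_part; simpl. unfold is_box_type at 1; simpl.
  pose proof (Hbox (x, A) (or_introl eq_refl)) as HA; simpl in HA; rewrite HA.
  f_equal. apply IH. intros p Hp. apply Hbox. right; exact Hp.
Qed.

Theorem mainTheorem1 :
  forall (G T : ctx) (V : value) (A : ty) (D : cctx),
    pol A = Bx ->
    vty G T V A D ->
    vty (box_part G) T V A [].
Proof.
  intros G T V A D HA H. induction H; simpl in HA; try discriminate.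
  - apply ty_var, in_box_part; assumption.
  - apply ty_mvar; assumption.
  - apply pol_odot_eq_Bx in HA as [HA HB]. apply ty_pair; auto.
  - apply ty_unit.
  - apply pol_odot_eq_Bx in HA as [HA HB]. apply ty_inj1; auto.
  - apply pol_odot_eq_Bx in HA as [HA HB]. apply ty_inj2; auto.
  - rewrite box_part_id by assumption. apply ty_box; assumption.
  - congruence.
  - apply ty_struct with (box_part G) T []; auto using incl_refl, box_part_incl.
Qed.
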